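(* Let $\ell>0$. The functions $D_\ell$, $\Gamma_\ell$ and $\sqrt{\Gamma_\ell}$ on $\mathbb R_+$ are positive, globally Lipschitz continuous and bounded. The function $A_\ell$ is bounded above but not below; it has continuous first derivative on all of $\mathbb R_+$ and is locally Lipschitz, in particular $|A_\ell(x)-A_\ell(y)|\lesssim(1+|x|)|y-x|$ for $x,y\in\mathbb R_+$. Moreover $A_\ell(x)>0$ for $x\in[0,1)$, $A_\ell(x)<0$ for $x>1$, and $A_\ell(1)=0$.
   Context: $\mathbb R_+=[0,\infty)$; $a\lesssim b$ means $a\le Kb$ for a constant $K$ independent of $x,y$. With $\Phi$ the standard normal cdf: for $x>0$, $D_\ell(x)=2\ell^2e^{\ell^2(x-1)}\Phi\big(\tfrac{\ell(1-2x)}{\sqrt{2x}}\big)$, $\Gamma_\ell(x)=D_\ell(x)+2\ell^2\Phi\big(-\tfrac{\ell}{\sqrt{2x}}\big)$, $A_\ell(x)=-2xD_\ell(x)+\Gamma_\ell(x)$; and $D_\ell(0)=\Gamma_\ell(0)=A_\ell(0)=2\ell^2e^{-\ell^2}$. *)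

From Stdlib Require Import Reals Lra.
From Coquelicot Require Import Coquelicot.
Open Scope R_scope.

Definition Phi (x : R) : R :=
  / 2 + / sqrt (2 * PI) * RInt (fun t => exp (- (t ^ 2) / 2)) 0 x.

(* The functions are only relevant on R_+ = [0,oo); for x <= 0 we use the
   value prescribed at 0 (only x = 0 matters). *)
Definition D_ (l x : R) : R :=
  if Rle_dec x 0 then 2 * l ^ 2 * exp (- l ^ 2)
  else 2 * l ^ 2 * exp (l ^ 2 * (x - 1)) * Phi (l * (1 - 2 * x) / sqrt (2 * x)).

Definition Gamma_ (l x : R) : R :=
  if Rle_dec x 0 then 2 * l ^ 2 * exp (- l ^ 2)
  else D_ l x + 2 * l ^ 2 * Phi (- l / sqrt (2 * x)).

Definition A_ (l x : R) : R :=
  if Rle_dec x 0 then 2 * l ^ 2 * exp (- l ^ 2)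
  else - 2 * x * D_ l x + Gamma_ l x.

Definition pos_on_Rplus (f : R -> R) : Prop := forall x, 0 <= x -> 0 < f x.

Definition lipschitz_on_Rplus (f : R -> R) : Prop :=
  exists L, forall x y, 0 <= x -> 0 <= y -> Rabs (f x - f y) <= L * Rabs (x - y).

Definition bounded_on_Rplus (f : R -> R) : Prop :=
  exists M, forall x, 0 <= x -> Rabs (f x) <= M.

Definition bounded_above_on_Rplus (f : R -> R) : Prop :=
  exists M, forall x, 0 <= x -> f x <= M.

Definition bounded_below_on_Rplus (f : R -> R) : Prop :=
  exists M, forall x, 0 <= x -> M <= f x.

Definition loc_lipschitz_on_Rplus (f : R -> R) : Prop :=
  forall M, 0 <= M -> exists L, forall x y, 0 <= x <= M -> 0 <= y <= M ->
    Rabs (f x - f y) <= L * Rabs (x - y).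

Definition C1_on_Rplus (f : R -> R) : Prop :=
  exists f' : R -> R,
    (forall x, 0 <= x ->
       filterlim (fun y => (f y - f x) / (y - x))
         (within (fun y => 0 <= y /\ y <> x) (locally x)) (locally (f' x))) /\
    (forall x, 0 <= x ->
       filterlim f' (within (fun y => 0 <= y) (locally x)) (locally (f' x))).

(* Write [p = l / sqrt (2 x)] and [q = (2 x - 1) p].  Then
     D = 2 l^2 phi(p) e^(q^2/2) Phi(-q),   Gamma = D + 2 l^2 Phi(-p),
     A = (2 l^2 phi(p) / p) (m(p) - m(q)),   m(t) = t Phi(-t) e^(t^2/2),
   with [phi t = exp (- t^2 / 2)].  Mills' inequality
   [c t phi(t) < (1 + t^2) Phi(-t)] says exactly that [m] is strictly increasing, so
   [A] has the sign of [p - q], i.e. of [1 - x]; along [x = U^2 / 2] the same identity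
   gives [A <= 2 l^2 - k U], so [A] is unbounded below.  The Gaussian tail bound
   [Phi(-t) <= phi(t)] (from Laplace's computation of the Gaussian integral) and the
   boundedness of [t^k phi(t)] bound [D], [Gamma] and their derivatives, bound [A'] by
   [O(1 + x)], and give [O(x)] estimates near [0] for [D], [Gamma], [A] and [A'], which
   yield continuity and the one-sided derivative at [0].  The Lipschitz properties then
   follow from the mean value theorem. *)

From Stdlib Require Import Reals Lra Psatz.
From Coquelicot Require Import Coquelicot.
Open Scope R_scope.

(** * Calculus on the half-line *)

Lemma exp_le_monotone (a b : R) : a <= b -> exp a <= exp b.
Proof. intros [h | ->]; [left; apply exp_increasing |]; lra. Qed.

Lemma exp_le_1 (a : R) : a <= 0 -> exp a <= 1.
Proof. intros h. rewrite <- exp_0. now apply exp_le_monotone. Qed.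

Lemma is_derive_continuity_pt (f : R -> R) (x l : R) :
  is_derive f x l -> continuity_pt f x.
Proof.
  intros H. apply derivable_continuous_pt. exists l. now apply is_derive_Reals.
Qed.

Lemma ex_derive_continuous_R (f : R -> R) (x : R) : ex_derive f x -> continuous f x.
Proof. exact (@ex_derive_continuous R_AbsRing R_NormedModule f x). Qed.

Lemma MVT_is_derive (f df : R -> R) (a b : R) : a < b ->
  (forall x, a <= x <= b -> is_derive f x (df x)) ->
  exists c, a < c < b /\ f b - f a = df c * (b - a).
Proof.
  intros hab Hd. destruct (MVT_cor2 f df a b hab) as [c [e hc]].
  - intros; apply is_derive_Reals, Hd; assumption.
  - now exists c.
Qed.

Lemma is_derive_0_constant (f : R -> R) :
  (forall x, is_derive f x 0) -> forall x y, f x = f y.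
Proof.
  intros H x y.
  destruct (Rtotal_order x y) as [h | [-> | h]]; [| reflexivity |].
  - destruct (MVT_is_derive f (fun _ => 0) x y) as [c [_ e]]; auto; lra.
  - destruct (MVT_is_derive f (fun _ => 0) y x) as [c [_ e]]; auto; lra.
Qed.

Lemma is_derive_pos_lt (f df : R -> R) (a b : R) : a < b ->
  (forall x, a <= x <= b -> is_derive f x (df x)) ->
  (forall x, a < x < b -> 0 < df x) -> f a < f b.
Proof.
  intros hab Hd Hp. destruct (MVT_is_derive f df a b) as [c [hc e]]; auto.
  specialize (Hp c hc). nra.
Qed.

Lemma Rabs_sub_le_derive_bound (f df : R -> R) (a b B : R) :
  (forall x, Rmin a b < x < Rmax a b -> is_derive f x (df x)) ->
  (forall x, Rmin a b <= x <= Rmax a b -> continuity_pt f x) ->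
  (forall x, Rmin a b < x < Rmax a b -> Rabs (df x) <= B) ->
  Rabs (f b - f a) <= B * Rabs (b - a).
Proof.
  intros Hd Hc Hb. destruct (Req_dec a b) as [<- | hab].
  { rewrite !Rminus_diag, Rabs_R0. lra. }
  assert (hm : Rmin a b < Rmax a b).
  { destruct (Rle_dec a b); [rewrite Rmin_left, Rmax_right | rewrite Rmin_right, Rmax_left];
      lra. }
  assert (hB : 0 <= B).
  { pose proof (Hb ((Rmin a b + Rmax a b) / 2) ltac:(lra)).
    pose proof (Rabs_pos (df ((Rmin a b + Rmax a b) / 2))). lra. }
  (* [MVT_gen] may return an endpoint, where [df] is not controlled; cut it off there. *)
  set (df' x := if Rlt_dec (Rmin a b) x then if Rlt_dec x (Rmax a b) then df x else 0 else 0).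
  assert (hin : forall x, Rmin a b < x < Rmax a b -> df' x = df x).
  { intros x [h1 h2]. unfold df'.
    destruct (Rlt_dec (Rmin a b) x); [destruct (Rlt_dec x (Rmax a b)) |]; lra. }
  destruct (MVT_gen f a b df') as [c [hc e]].
  - intros x hx. rewrite hin by assumption. now apply Hd.
  - exact Hc.
  - rewrite e, Rabs_mult. apply Rmult_le_compat_r; [apply Rabs_pos |].
    unfold df'. destruct (Rlt_dec (Rmin a b) c); [destruct (Rlt_dec c (Rmax a b)) |].
    + apply Hb; lra.
    + rewrite Rabs_R0; lra.
    + rewrite Rabs_R0; lra.
Qed.

Lemma sqrt_lipschitz_above (a b m : R) : 0 < m -> m <= a -> m <= b ->
  Rabs (sqrt a - sqrt b) <= / (2 * sqrt m) * Rabs (a - b).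
Proof.
  intros hm ha hb.
  assert (hsm : 0 < sqrt m) by (apply sqrt_lt_R0; lra).
  pose proof (sqrt_le_1_alt m a ha). pose proof (sqrt_le_1_alt m b hb).
  pose proof (sqrt_sqrt a ltac:(lra)). pose proof (sqrt_sqrt b ltac:(lra)).
  replace (a - b) with ((sqrt a - sqrt b) * (sqrt a + sqrt b)) by nra.
  rewrite Rabs_mult, (Rabs_right (sqrt a + sqrt b)) by lra.
  apply (Rmult_le_reg_l (2 * sqrt m)); [lra |].
  rewrite <- Rmult_assoc, Rinv_r, Rmult_1_l by lra.
  pose proof (Rabs_pos (sqrt a - sqrt b)). nra.
Qed.

Section RplusRegularity.

Variables f df : R -> R.
Hypothesis f_deriv : forall x, 0 < x -> is_derive f x (df x).
Hypothesis f_cont0 : continuity_pt f 0.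

Lemma continuity_pt_Rplus (x : R) : 0 <= x -> continuity_pt f x.
Proof.
  intros [hx | <-]; [| exact f_cont0].
  exact (is_derive_continuity_pt _ _ _ (f_deriv x hx)).
Qed.

Lemma Rabs_sub_le_derive_bound_Rplus (x y B : R) : 0 <= x -> 0 <= y ->
  (forall c, Rmin x y < c < Rmax x y -> Rabs (df c) <= B) ->
  Rabs (f x - f y) <= B * Rabs (x - y).
Proof.
  intros hx hy Hb. apply (Rabs_sub_le_derive_bound f df y x B).
  - intros c hc. apply f_deriv.
    pose proof (Rmin_glb y x 0 hy hx). lra.
  - intros c hc. apply continuity_pt_Rplus.
    pose proof (Rmin_glb y x 0 hy hx). lra.
  - intros c hc. apply Hb. now rewrite Rmin_comm, Rmax_comm.
Qed.

Lemma lipschitz_on_Rplus_of_derive (K : R) :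
  (forall x, 0 < x -> Rabs (df x) <= K) -> lipschitz_on_Rplus f.
Proof.
  intros Hb. exists K. intros x y hx hy.
  apply Rabs_sub_le_derive_bound_Rplus; auto.
  intros c hc. apply Hb. pose proof (Rmin_glb x y 0 hx hy). lra.
Qed.

(* For [y > 2x + 1] the mean value bound is too weak; there the growth bound on [f]
   suffices, since [y - x] then dominates [1 + x + y]. *)
Lemma weighted_lipschitz_of_derive (K M : R) :
  (forall x, 0 < x -> Rabs (df x) <= K * (1 + x)) ->
  (forall x, 0 <= x -> Rabs (f x) <= M * (1 + x)) ->
  exists K', forall x y, 0 <= x -> 0 <= y ->
    Rabs (f x - f y) <= K' * (1 + Rabs x) * Rabs (y - x).
Proof.
  intros Hd Hf.
  assert (hK : 0 <= K) by (pose proof (Hd 1 Rlt_0_1); pose proof (Rabs_pos (df 1)); lra).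
  assert (hM : 0 <= M) by (pose proof (Hf 0 (Rle_refl 0)); pose proof (Rabs_pos (f 0)); lra).
  exists (2 * K + 3 * M). intros x y hx hy.
  rewrite (Rabs_right x), (Rabs_minus_sym y x) by lra.
  pose proof (Rabs_pos (x - y)).
  destruct (Rle_dec y (2 * x + 1)) as [hyx | hyx].
  - apply (Rle_trans _ (2 * K * (1 + x) * Rabs (x - y))).
    + apply Rabs_sub_le_derive_bound_Rplus; auto. intros c hc.
      pose proof (Rmax_lub x y (2 * x + 1) ltac:(lra) hyx).
      pose proof (Rmin_glb x y 0 hx hy).
      pose proof (Hd c ltac:(lra)). nra.
    + apply Rmult_le_compat_r; nra.
  - rewrite (Rabs_left (x - y)) by lra.
    pose proof (Hf x hx) as h1. pose proof (Hf y hy) as h2.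
    apply Rabs_le_between in h1. apply Rabs_le_between in h2.
    assert (hg : M * (2 + x + y) <= 3 * M * (y - x)) by nra.
    assert (hw : 0 <= (y - x) * (2 * K * (1 + x) + 3 * M * x)) by (apply Rmult_le_pos; nra).
    apply Rabs_le; split; nra.
Qed.

End RplusRegularity.

Lemma loc_lipschitz_of_weighted (g : R -> R) (K : R) :
  (forall x y, 0 <= x -> 0 <= y -> Rabs (g x - g y) <= K * (1 + Rabs x) * Rabs (y - x)) ->
  loc_lipschitz_on_Rplus g.
Proof.
  intros H M hM.
  assert (hK : 0 <= K).
  { pose proof (H 0 1 (Rle_refl 0) Rle_0_1) as h.
    rewrite Rabs_R0, Rminus_0_r, Rabs_R1 in h. pose proof (Rabs_pos (g 0 - g 1)). lra. }
  exists (K * (1 + M)). intros x y hx hy.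
  apply (Rle_trans _ _ _ (H x y (proj1 hx) (proj1 hy))).
  rewrite (Rabs_right x), (Rabs_minus_sym y x) by lra.
  apply Rmult_le_compat_r; [apply Rabs_pos |]. apply Rmult_le_compat_l; lra.
Qed.

Lemma small_linear (C eps : R) : 0 < eps ->
  exists d, 0 < d /\ forall y, Rabs y < d -> Rabs y <= / 2 /\ C * Rabs y < eps.
Proof.
  intros he. pose proof (Rabs_pos C). pose proof (Rle_abs C).
  exists (Rmin (/ 2) (eps / (Rabs C + 1))). split.
  { apply Rmin_pos; [lra | apply Rdiv_lt_0_compat; lra]. }
  intros y hy. pose proof (Rabs_pos y).
  pose proof (Rlt_le_trans _ _ _ hy (Rmin_l _ _)).
  pose proof (Rlt_le_trans _ _ _ hy (Rmin_r _ _)) as h.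
  split; [lra |].
  apply (Rmult_lt_compat_r (Rabs C + 1)) in h; [| lra].
  replace (eps / (Rabs C + 1) * (Rabs C + 1)) with eps in h by (field; lra).
  nra.
Qed.

Lemma filterlim_within_eps (g : R -> R) (P : R -> Prop) (x l : R) :
  (forall eps, 0 < eps -> exists d, 0 < d /\
     forall y, P y -> Rabs (y - x) < d -> Rabs (g y - l) < eps) ->
  filterlim g (within P (locally x)) (locally l).
Proof.
  intros H Q [eps HQ]. destruct (H eps (cond_pos eps)) as [d [hd Hd]].
  exists (mkposreal d hd). intros y hy Py. apply HQ, Hd; auto.
Qed.

Lemma continuity_pt_0_of_right_bound (g : R -> R) (C : R) :
  (forall y, y <= 0 -> g y = g 0) ->
  (forall y, 0 < y <= / 2 -> Rabs (g y - g 0) <= C * y) ->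
  continuity_pt g 0.
Proof.
  intros Hl Hr eps he. destruct (small_linear C eps he) as [d [hd Hd]].
  exists d. split; [exact hd |]. intros y [_ hy]. simpl in *. unfold R_dist in *.
  rewrite Rminus_0_r in hy. destruct (Hd y hy) as [hy2 hCy].
  destruct (Rle_dec y 0) as [hy0 | hy0].
  - rewrite (Hl y hy0), Rminus_diag, Rabs_R0. lra.
  - rewrite Rabs_right in hy2, hCy by lra.
    apply (Rle_lt_trans _ (C * y)); [apply Hr |]; lra.
Qed.

Lemma filterlim_within_0_of_right_bound (g : R -> R) (P : R -> Prop) (l C : R) :
  (forall y, P y -> 0 <= y) ->
  (forall y, P y -> y <= / 2 -> Rabs (g y - l) <= C * y) ->
  filterlim g (within P (locally 0)) (locally l).
Proof.
  intros HP Hb. apply filterlim_within_eps. intros eps he.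
  destruct (small_linear C eps he) as [d [hd Hd]].
  exists d. split; [exact hd |]. intros y Py hy. rewrite Rminus_0_r in hy.
  destruct (Hd y hy) as [hy2 hCy]. rewrite Rabs_right in hy2, hCy by (apply Rle_ge, HP, Py).
  apply (Rle_lt_trans _ (C * y)); [apply Hb |]; auto.
Qed.

Section OneSidedC1.

Variables f df : R -> R.
Variables L C : R.
Hypothesis f_deriv : forall x, 0 < x -> is_derive f x (df x).
Hypothesis df_cont : forall x, 0 < x -> continuity_pt df x.
Hypothesis f_cont0 : continuity_pt f 0.
Hypothesis df_near0 : forall x, 0 < x <= / 2 -> Rabs (df x - L) <= C * x.

Lemma difference_quotient_near0 (y : R) : 0 < y <= / 2 ->
  Rabs ((f y - f 0) / (y - 0) - L) <= C * y.
Proof.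
  intros hy.
  set (g x := f x - L * x).
  assert (H : Rabs (g y - g 0) <= C * y * Rabs (y - 0)).
  { apply (Rabs_sub_le_derive_bound_Rplus g (fun x => df x - L)).
    - intros x hx. apply (is_derive_plus f (fun x => - (L * x))); [now apply f_deriv |].
      auto_derive; [exact I | ring].
    - apply continuity_pt_minus; [exact f_cont0 |].
      apply continuity_pt_mult; [apply continuity_pt_const; intros ? ?; reflexivity |].
      apply derivable_continuous_pt, derivable_pt_id.
    - lra.
    - lra.
    - intros c hc. rewrite Rmin_right, Rmax_left in hc by lra.
      apply (Rle_trans _ (C * c)); [apply df_near0; lra |].
      pose proof (df_near0 c ltac:(lra)). pose proof (Rabs_pos (df c - L)).
      apply Rmult_le_compat_l; nra. }
  unfold g in H. rewrite Rminus_0_r, (Rabs_right y) in H by lra. rewrite Rminus_0_r.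
  replace ((f y - f 0) / y - L) with ((f y - L * y - (f 0 - L * 0)) / y) by (field; lra).
  unfold Rdiv. rewrite Rabs_mult, Rabs_inv, (Rabs_right y) by lra.
  apply (Rmult_le_reg_r y); [lra |]. rewrite Rmult_assoc, Rinv_l, Rmult_1_r by lra. exact H.
Qed.

Lemma C1_on_Rplus_of_derive : C1_on_Rplus f.
Proof.
  exists (fun x => if Rle_dec x 0 then L else df x). split.
  - intros x [hx | <-].
    + destruct (Rle_dec x 0) as [? | _]; [lra |].
      pose proof (proj1 (is_derive_Reals _ _ _) (f_deriv x hx)) as Hd.
      apply filterlim_within_eps. intros eps he. destruct (Hd eps he) as [d Hd'].
      exists d. split; [apply cond_pos |]. intros y [hy hyx] hyd.
      specialize (Hd' (y - x) ltac:(lra) hyd).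
      now replace (x + (y - x)) with y in Hd' by ring.
    + destruct (Rle_dec 0 0) as [_ | ?]; [| lra].
      apply (filterlim_within_0_of_right_bound _ _ _ C); [tauto |].
      intros y [hy hy0] hy2. apply difference_quotient_near0. lra.
  - intros x [hx | <-].
    + destruct (Rle_dec x 0) as [? | _]; [lra |].
      apply filterlim_within_eps. intros eps he.
      destruct (df_cont x hx eps he) as [d [hd Hd]].
      exists (Rmin d x). split; [now apply Rmin_pos |]. intros y hy hyd.
      pose proof (Rlt_le_trans _ _ _ hyd (Rmin_l _ _)) as hyd1.
      pose proof (Rabs_def2 _ _ (Rlt_le_trans _ _ _ hyd (Rmin_r _ _))) as hyx1.
      destruct (Rle_dec y 0) as [? | _]; [lra |].
      destruct (Req_dec y x) as [-> | hyx]; [rewrite Rminus_diag, Rabs_R0; lra |].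
      apply (Hd y). split; [split; [exact I | auto] | exact hyd1].
    + destruct (Rle_dec 0 0) as [_ | ?]; [| lra].
      apply (filterlim_within_0_of_right_bound _ _ _ C); [tauto |].
      intros y hy hy2. destruct (Rle_dec y 0) as [hy0 | hy0].
      * rewrite Rminus_diag, Rabs_R0. replace y with 0 by lra. lra.
      * apply df_near0. lra.
Qed.

End OneSidedC1.

(** * The standard normal distribution *)

(* Make syntactically different but equal arguments of [f] coincide, so that [field]
   can treat the applications of [f] as one atom. *)
Ltac normalize_args f :=
  repeat match goal with
  | |- context [f ?a] => match goal with |- context [f ?b] =>
      assert_fails (constr_eq a b);
      replace a with b by (solve [ring | field | field; lra | field; nra]) end
  end.

Ltac normalize_exp_args := normalize_args exp.

Definition phi (t : R) : R := exp (- (t ^ 2) / 2).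

Definition int_phi (x : R) : R := RInt phi 0 x.

Definition inv_sqrt_2pi : R := / sqrt (2 * PI).

Lemma Phi_int_phi (x : R) : Phi x = / 2 + inv_sqrt_2pi * int_phi x.
Proof. reflexivity. Qed.

Lemma phi_pos (t : R) : 0 < phi t.
Proof. apply exp_pos. Qed.

Lemma phi_opp (t : R) : phi (- t) = phi t.
Proof. unfold phi. now replace ((- t) ^ 2) with (t ^ 2) by ring. Qed.

Lemma phi_mul_exp (t : R) : phi t * exp (t ^ 2 / 2) = 1.
Proof. unfold phi. rewrite <- exp_plus, <- exp_0. f_equal. field. Qed.

Lemma phi_le_1 (t : R) : phi t <= 1.
Proof. apply exp_le_1. nra. Qed.

Lemma phi_continuous (t : R) : continuous phi t.
Proof. apply ex_derive_continuous_R. unfold phi. auto_derive. exact I. Qed.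

Lemma ex_RInt_phi (a b : R) : ex_RInt phi a b.
Proof. apply (@ex_RInt_continuous R_CompleteNormedModule). intros; apply phi_continuous. Qed.

Lemma int_phi_deriv (x : R) : is_derive int_phi x (phi x).
Proof.
  apply (@is_derive_RInt R_CompleteNormedModule) with (a := 0).
  - apply filter_forall. intros. apply (@RInt_correct R_CompleteNormedModule), ex_RInt_phi.
  - apply phi_continuous.
Qed.

Lemma int_phi_0 : int_phi 0 = 0.
Proof. apply (@RInt_point R_CompleteNormedModule). Qed.

(* Laplace's proof of the Gaussian integral: [arctan_int x + int_phi x ^ 2 / 2]
   has derivative zero and equals [atan 1 = PI / 4] at [x = 0]. *)
Definition arctan_kernel (x t : R) : R := exp (- (x ^ 2 * (1 + t ^ 2)) / 2) / (1 + t ^ 2).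

Definition arctan_int (x : R) : R := RInt (fun t => arctan_kernel x t) 0 1.

Lemma arctan_kernel_deriv (x t : R) :
  is_derive (fun z => arctan_kernel z t) x (- x * exp (- (x ^ 2 * (1 + t ^ 2)) / 2)).
Proof. unfold arctan_kernel. auto_derive; [nra |]. normalize_exp_args. field. nra. Qed.

Lemma arctan_kernel_continuous (x t : R) : continuous (fun t => arctan_kernel x t) t.
Proof. apply ex_derive_continuous_R. unfold arctan_kernel. auto_derive. nra. Qed.

Lemma continuity_2d_pt_exp (g : R -> R -> R) (x y : R) :
  continuity_2d_pt g x y -> continuity_2d_pt (fun u v => exp (g u v)) x y.
Proof.
  intros H. apply continuity_2d_pt_filterlim in H. apply continuity_2d_pt_filterlim.
  apply (filterlim_comp _ _ _ (fun z => g (fst z) (snd z)) exp _ _ _ H).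
  apply ex_derive_continuous_R. auto_derive. exact I.
Qed.

Lemma arctan_int_deriv (x : R) : is_derive arctan_int x (- phi x * int_phi x).
Proof.
  assert (E : RInt (fun t => Derive (fun u => arctan_kernel u t) x) 0 1 = - phi x * int_phi x).
  { rewrite (RInt_ext _ (fun t => scal (- phi x) (scal x (phi (x * t + 0))))).
    2:{ intros t _. erewrite is_derive_unique by apply arctan_kernel_deriv.
        unfold scal; cbn -[pow exp]; unfold mult; cbn -[pow exp]; unfold phi.
        replace (exp (- (x ^ 2 * (1 + t ^ 2)) / 2))
          with (exp (- x ^ 2 / 2) * exp (- (x * t + 0) ^ 2 / 2))
          by (rewrite <- exp_plus; f_equal; field).
        ring. }
    rewrite (@RInt_scal R_CompleteNormedModule).
    2:{ apply (@ex_RInt_continuous R_CompleteNormedModule). intros.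
        apply (continuous_scal_r x (fun t => phi (x * t + 0))).
        apply continuous_comp; [apply ex_derive_continuous_R; auto_derive; exact I |].
        apply phi_continuous. }
    rewrite (@RInt_comp_lin R_CompleteNormedModule) by apply ex_RInt_phi.
    unfold int_phi. now replace (x * 0 + 0) with 0 by ring; replace (x * 1 + 0) with x by ring. }
  rewrite <- E. apply (is_derive_RInt_param arctan_kernel 0 1 x).
  - apply filter_forall. intros y t _. eexists. apply arctan_kernel_deriv.
  - intros t _.
    apply continuity_2d_pt_ext with (f := fun u v => - u * exp (- (u ^ 2 * (1 + v ^ 2)) / 2)).
    { intros u v. symmetry. apply is_derive_unique, arctan_kernel_deriv. }
    apply continuity_2d_pt_mult; [apply continuity_2d_pt_opp, continuity_2d_pt_id1 |].
    apply continuity_2d_pt_exp.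
    apply continuity_2d_pt_ext with (f := fun u v => (- / 2) * (u * u * (1 + v * v))).
    { intros; field. }
    repeat first [ apply continuity_2d_pt_mult | apply continuity_2d_pt_plus
                 | apply continuity_2d_pt_const | apply continuity_2d_pt_id1
                 | apply continuity_2d_pt_id2 ].
  - apply filter_forall. intros y.
    apply (@ex_RInt_continuous R_CompleteNormedModule). intros; apply arctan_kernel_continuous.
Qed.

Lemma arctan_int_0 : arctan_int 0 = PI / 4.
Proof.
  unfold arctan_int. rewrite (RInt_ext _ (fun t => / (1 + t ^ 2))).
  2:{ intros t _. unfold arctan_kernel. replace (- (0 ^ 2 * (1 + t ^ 2)) / 2) with 0 by field.
      rewrite exp_0. apply Rmult_1_l. }
  assert (H : is_RInt (fun t => / (1 + t ^ 2)) 0 1 (minus (atan 1) (atan 0))).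
  { apply (@is_RInt_derive R_CompleteNormedModule).
    - intros x _. apply is_derive_Reals, derivable_pt_lim_atan.
    - intros x _. apply ex_derive_continuous_R. auto_derive. nra. }
  rewrite (is_RInt_unique _ _ _ _ H), atan_1, atan_0.
  unfold minus, plus, opp; simpl. field.
Qed.

Lemma arctan_int_plus_sq (x : R) : arctan_int x + int_phi x ^ 2 / 2 = PI / 4.
Proof.
  rewrite <- arctan_int_0.
  replace (arctan_int 0) with (arctan_int 0 + int_phi 0 ^ 2 / 2) by (rewrite int_phi_0; field).
  apply (is_derive_0_constant (fun y => arctan_int y + int_phi y ^ 2 / 2)). intros y.
  replace 0 with (- phi y * int_phi y + scal (phi y) (2 * int_phi y / 2))
    by (unfold scal; simpl; unfold mult; simpl; field).
  apply (is_derive_plus arctan_int (fun y => int_phi y ^ 2 / 2)); [apply arctan_int_deriv |].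
  apply (is_derive_comp (fun w => w ^ 2 / 2) int_phi y); [| apply int_phi_deriv].
  auto_derive; [exact I | field].
Qed.

Lemma arctan_int_bounds (x : R) : 0 <= arctan_int x <= phi x.
Proof.
  assert (Hk : forall t, 0 <= t <= 1 -> 0 <= arctan_kernel x t <= phi x).
  { intros t _. unfold arctan_kernel, phi.
    pose proof (exp_pos (- (x ^ 2 * (1 + t ^ 2)) / 2)).
    assert (exp (- (x ^ 2 * (1 + t ^ 2)) / 2) <= exp (- x ^ 2 / 2)) by (apply exp_le_monotone; nra).
    assert (ht : 1 <= 1 + t ^ 2) by nra.
    split; [apply Rle_mult_inv_pos; lra |].
    apply (Rmult_le_reg_r (1 + t ^ 2)); [lra |].
    unfold Rdiv. rewrite Rmult_assoc, Rinv_l, Rmult_1_r by lra. nra. }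
  assert (Hex : ex_RInt (fun t => arctan_kernel x t) 0 1).
  { apply (@ex_RInt_continuous R_CompleteNormedModule). intros; apply arctan_kernel_continuous. }
  unfold arctan_int. split.
  - apply RInt_ge_0; auto; [lra |]. intros; apply Hk; lra.
  - apply (Rle_trans _ (RInt (fun _ => phi x) 0 1)).
    + apply RInt_le; auto; [lra | apply ex_RInt_const |]. intros; apply Hk; lra.
    + rewrite RInt_const. unfold scal; simpl; unfold mult; simpl. lra.
Qed.

Lemma int_phi_sq_bounds (x : R) : int_phi x ^ 2 <= PI / 2 /\ PI / 2 - int_phi x ^ 2 <= 2 * phi x.
Proof. pose proof (arctan_int_plus_sq x). pose proof (arctan_int_bounds x). lra. Qed.

Lemma inv_sqrt_2pi_pos : 0 < inv_sqrt_2pi.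
Proof. apply Rinv_0_lt_compat, sqrt_lt_R0. pose proof PI_RGT_0; lra. Qed.

Lemma inv_sqrt_2pi_sq : inv_sqrt_2pi ^ 2 = / (2 * PI).
Proof.
  unfold inv_sqrt_2pi. rewrite pow_inv, <- Rsqr_pow2, Rsqr_sqrt; [reflexivity |].
  pose proof PI_RGT_0; lra.
Qed.

Lemma Phi_deriv (x : R) : is_derive Phi x (inv_sqrt_2pi * phi x).
Proof.
  apply (is_derive_ext (fun y => / 2 + inv_sqrt_2pi * int_phi y)); [reflexivity |].
  auto_derive; [eexists; apply int_phi_deriv |].
  erewrite is_derive_unique by apply int_phi_deriv. ring.
Qed.

Lemma ex_derive_Phi (x : R) : ex_derive (fun t => Phi t) x.
Proof. eexists. apply Phi_deriv. Qed.

Lemma Derive_Phi (x : R) : Derive (fun t => Phi t) x = inv_sqrt_2pi * phi x.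
Proof. apply is_derive_unique, Phi_deriv. Qed.

Lemma int_phi_opp (x : R) : int_phi (- x) = - int_phi x.
Proof.
  enough (H : int_phi x + int_phi (- x) = int_phi 0 + int_phi (- 0)).
  { rewrite Ropp_0, int_phi_0 in H. lra. }
  apply (is_derive_0_constant (fun z => int_phi z + int_phi (- z))). intros y.
  replace 0 with (phi y + scal (-1) (phi (- y)))
    by (rewrite phi_opp; unfold scal; simpl; unfold mult; simpl; ring).
  apply (is_derive_plus int_phi); [apply int_phi_deriv |].
  apply (is_derive_comp int_phi (fun z => - z)); [apply int_phi_deriv |].
  auto_derive; [exact I | ring].
Qed.

Lemma int_phi_increasing (x y : R) : x < y -> int_phi x < int_phi y.
Proof.
  intros h. apply (is_derive_pos_lt int_phi phi); auto.
  - intros; apply int_phi_deriv.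
  - intros; apply phi_pos.
Qed.

Lemma int_phi_nonneg (x : R) : 0 <= x -> 0 <= int_phi x.
Proof.
  intros [h | <-]; [| rewrite int_phi_0; lra].
  rewrite <- int_phi_0. left. now apply int_phi_increasing.
Qed.

Lemma Phi_opp (x : R) : Phi (- x) = 1 - Phi x.
Proof. rewrite !Phi_int_phi, int_phi_opp. field. Qed.

Lemma Phi_0 : Phi 0 = / 2.
Proof. rewrite Phi_int_phi, int_phi_0. ring. Qed.

Lemma Phi_increasing (x y : R) : x < y -> Phi x < Phi y.
Proof.
  intros h. rewrite !Phi_int_phi. pose proof (int_phi_increasing x y h).
  pose proof inv_sqrt_2pi_pos. nra.
Qed.

Lemma Phi_le_1 (x : R) : Phi x <= 1.
Proof.
  rewrite Phi_int_phi. destruct (int_phi_sq_bounds x) as [h _].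
  pose proof inv_sqrt_2pi_sq. pose proof inv_sqrt_2pi_pos. pose proof PI_RGT_0.
  assert (hsq : (inv_sqrt_2pi * int_phi x) ^ 2 <= / 4).
  { rewrite Rpow_mult_distr, inv_sqrt_2pi_sq.
    apply (Rmult_le_reg_l (2 * PI)); [lra |].
    rewrite <- Rmult_assoc, Rinv_r, Rmult_1_l by lra. lra. }
  nra.
Qed.

Lemma Phi_lt_1 (x : R) : Phi x < 1.
Proof. pose proof (Phi_increasing x (x + 1)). pose proof (Phi_le_1 (x + 1)). lra. Qed.

Lemma Phi_pos (x : R) : 0 < Phi x.
Proof. rewrite <- (Ropp_involutive x), Phi_opp. pose proof (Phi_lt_1 (- x)). lra. Qed.

(* [(1/2 - c G)(1/2 + c G) = (PI/2 - G^2) / (2 PI) <= phi x / PI] by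
   [int_phi_sq_bounds], and [1/2 + c G >= 1/2]. *)
Lemma Phi_opp_le_phi (x : R) : 0 <= x -> Phi (- x) <= phi x.
Proof.
  intros hx. rewrite Phi_int_phi, int_phi_opp.
  destruct (int_phi_sq_bounds x) as [_ h]. pose proof (int_phi_nonneg x hx).
  pose proof inv_sqrt_2pi_pos. pose proof PI_RGT_0. pose proof PI2_3_2. pose proof (phi_pos x).
  set (c := inv_sqrt_2pi) in *. set (G := int_phi x) in *.
  assert (e : (/ 2 - c * G) * (/ 2 + c * G) = (PI / 2 - G ^ 2) / (2 * PI)).
  { replace ((/ 2 - c * G) * (/ 2 + c * G)) with (/ 4 - c ^ 2 * G ^ 2) by field.
    unfold c. rewrite inv_sqrt_2pi_sq. field. lra. }
  assert (e2 : (PI / 2 - G ^ 2) / (2 * PI) <= phi x / 3).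
  { apply (Rmult_le_reg_l (6 * PI)); [lra |].
    replace (6 * PI * ((PI / 2 - G ^ 2) / (2 * PI))) with (3 * (PI / 2 - G ^ 2)) by (field; lra).
    replace (6 * PI * (phi x / 3)) with (2 * PI * phi x) by field. nra. }
  assert (0 <= c * G) by nra.
  replace (/ 2 + c * - G) with (/ 2 - c * G) by ring. nra.
Qed.

Lemma phi_mul_poly_le_1 (t : R) : phi t * (1 + t ^ 2 / 2 + t ^ 4 / 16) <= 1.
Proof.
  apply (Rle_trans _ (phi t * exp (t ^ 2 / 2))); [| rewrite phi_mul_exp; lra].
  apply Rmult_le_compat_l; [left; apply phi_pos |].
  replace (exp (t ^ 2 / 2)) with (exp (t ^ 2 / 4) * exp (t ^ 2 / 4))
    by (rewrite <- exp_plus; f_equal; field).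
  pose proof (exp_ineq1_le (t ^ 2 / 4)).
  replace (1 + t ^ 2 / 2 + t ^ 4 / 16) with ((1 + t ^ 2 / 4) * (1 + t ^ 2 / 4)) by field.
  apply Rmult_le_compat; nra.
Qed.

Lemma phi_moment1 (t : R) : 0 <= t -> t * phi t <= 1.
Proof.
  intros. pose proof (phi_mul_poly_le_1 t). pose proof (phi_pos t).
  assert (t <= 1 + t ^ 2 / 2 + t ^ 4 / 16) by nra. nra.
Qed.

Lemma phi_moment2 (t : R) : t ^ 2 * phi t <= 2.
Proof. pose proof (phi_mul_poly_le_1 t). pose proof (phi_pos t). nra. Qed.

Lemma phi_moment3 (t : R) : 0 <= t -> t ^ 3 * phi t <= 16.
Proof.
  intros. pose proof (phi_mul_poly_le_1 t). pose proof (phi_pos t).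
  assert (t ^ 3 <= 16 * (1 + t ^ 2 / 2 + t ^ 4 / 16)) by nra. nra.
Qed.

(* Mills' ratio: [Phi (-t) > c t phi t / (1 + t^2)], obtained from the monotonicity
   of the difference, which tends to [0] at infinity. *)
Definition mills_gap (t : R) : R :=
  Phi (- t) - inv_sqrt_2pi * t * phi t / (1 + t ^ 2).

Lemma mills_gap_deriv (t : R) :
  is_derive mills_gap t (- 2 * inv_sqrt_2pi * phi t / (1 + t ^ 2) ^ 2).
Proof.
  unfold mills_gap, phi. auto_derive.
  - repeat split; [apply ex_derive_Phi | nra].
  - rewrite Derive_Phi. unfold phi. normalize_exp_args. field. nra.
Qed.

Lemma mills_gap_decreasing (s t : R) : s < t -> mills_gap t < mills_gap s.
Proof.
  intros h.
  enough (- mills_gap s < - mills_gap t) by lra.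
  apply (is_derive_pos_lt (fun u => - mills_gap u)
           (fun u => - (- 2 * inv_sqrt_2pi * phi u / (1 + u ^ 2) ^ 2))); auto.
  - intros x _. apply (is_derive_opp mills_gap), mills_gap_deriv.
  - intros x _. pose proof (phi_pos x). pose proof inv_sqrt_2pi_pos.
    assert (0 < (1 + x ^ 2) ^ 2) by nra.
    assert (0 < inv_sqrt_2pi * phi x / (1 + x ^ 2) ^ 2) by (apply Rdiv_lt_0_compat; nra).
    unfold Rdiv in *. lra.
Qed.

Lemma mills_gap_lower (s : R) : 0 < s -> - (inv_sqrt_2pi / s) < mills_gap s.
Proof.
  intros hs. unfold mills_gap. pose proof (Phi_pos (- s)).
  pose proof (phi_le_1 s). pose proof (phi_pos s). pose proof inv_sqrt_2pi_pos.
  enough (inv_sqrt_2pi * s * phi s / (1 + s ^ 2) < inv_sqrt_2pi / s) by lra.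
  apply (Rmult_lt_reg_r ((1 + s ^ 2) * s)); [nra |].
  replace (inv_sqrt_2pi * s * phi s / (1 + s ^ 2) * ((1 + s ^ 2) * s))
    with (inv_sqrt_2pi * (s * s * phi s)) by (field; nra).
  replace (inv_sqrt_2pi / s * ((1 + s ^ 2) * s)) with (inv_sqrt_2pi * (1 + s ^ 2)) by (field; lra).
  apply Rmult_lt_compat_l; [lra |]. nra.
Qed.

Lemma mills_gap_pos (t : R) : 0 < t -> 0 < mills_gap t.
Proof.
  intros ht. apply (Rle_lt_trans _ (mills_gap (t + 1))); [| apply mills_gap_decreasing; lra].
  apply Rnot_lt_le. intros hneg. pose proof inv_sqrt_2pi_pos.
  set (s := t + 1 + inv_sqrt_2pi / (- mills_gap (t + 1))).
  assert (hq : 0 < inv_sqrt_2pi / (- mills_gap (t + 1))) by (apply Rdiv_lt_0_compat; lra).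
  pose proof (mills_gap_lower s ltac:(unfold s; lra)).
  pose proof (mills_gap_decreasing (t + 1) s ltac:(unfold s; lra)).
  assert (hs : inv_sqrt_2pi / s < inv_sqrt_2pi / (inv_sqrt_2pi / - mills_gap (t + 1))).
  { apply Rmult_lt_compat_l; [lra |].
    apply Rinv_lt_contravar; [apply Rmult_lt_0_compat |]; unfold s; lra. }
  replace (inv_sqrt_2pi / (inv_sqrt_2pi / - mills_gap (t + 1))) with (- mills_gap (t + 1))
    in hs by (field; lra).
  lra.
Qed.

Lemma mills_ineq (t : R) : 0 < t -> inv_sqrt_2pi * t * phi t < Phi (- t) * (1 + t ^ 2).
Proof.
  intros ht. pose proof (mills_gap_pos t ht) as h. unfold mills_gap in h.
  apply (Rmult_lt_compat_r (1 + t ^ 2)) in h; [| nra].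
  replace ((Phi (- t) - inv_sqrt_2pi * t * phi t / (1 + t ^ 2)) * (1 + t ^ 2))
    with (Phi (- t) * (1 + t ^ 2) - inv_sqrt_2pi * t * phi t) in h by (field; nra).
  lra.
Qed.

(* [t] times Mills' ratio [Phi (- t) / phi t] of the unnormalized density [phi]. *)
Definition mills (t : R) : R := t * Phi (- t) * exp (t ^ 2 / 2).

Lemma mills_deriv (t : R) :
  is_derive mills t ((1 + t ^ 2) * Phi (- t) * exp (t ^ 2 / 2) - inv_sqrt_2pi * t).
Proof.
  unfold mills. auto_derive; [repeat split; apply ex_derive_Phi |].
  rewrite Derive_Phi, phi_opp.
  replace (inv_sqrt_2pi * t) with (inv_sqrt_2pi * t * (phi t * exp (t ^ 2 / 2)))
    by (rewrite phi_mul_exp; ring).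
  normalize_exp_args. field.
Qed.

Lemma mills_increasing (s t : R) : s < t -> mills s < mills t.
Proof.
  intros h.
  apply (is_derive_pos_lt mills
           (fun x => (1 + x ^ 2) * Phi (- x) * exp (x ^ 2 / 2) - inv_sqrt_2pi * x) s t h);
    [intros; apply mills_deriv |].
  intros x _. pose proof (Phi_pos (- x)). pose proof (exp_pos (x ^ 2 / 2)).
  pose proof inv_sqrt_2pi_pos.
  destruct (Rle_dec x 0) as [hx | hx].
  - assert (0 < (1 + x ^ 2) * Phi (- x)) by nra. nra.
  - pose proof (mills_ineq x ltac:(lra)) as hm.
    apply (Rmult_lt_compat_r (exp (x ^ 2 / 2))) in hm; [| assumption].
    rewrite Rmult_assoc, phi_mul_exp, Rmult_1_r in hm. lra.
Qed.

Lemma mills_0 : mills 0 = 0.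
Proof. unfold mills. ring. Qed.

(** * The functions [D_], [Gamma_] and [A_] *)

(* Replace [x > 0] by [u ^ 2 / 2] with [u = sqrt (2 x)], so that [field] can check
   identities involving [sqrt (2 x)]. *)
Ltac elim_sqrt2x x :=
  let u := fresh "u" in let hu := fresh "hu" in let hu2 := fresh "hu2" in
  assert (hu : 0 < sqrt (2 * x)) by (apply sqrt_lt_R0; lra);
  assert (hu2 : sqrt (2 * x) * sqrt (2 * x) = 2 * x) by (apply sqrt_sqrt; lra);
  set (u := sqrt (2 * x)) in *; clearbody u;
  replace x with (u * u / 2) in * by lra; clear hu2.

Section Formulas.

Variable l : R.
Hypothesis hl : 0 < l.

Lemma l2_pos : 0 < l ^ 2.
Proof. nra. Qed.

Lemma D_nonpos_eq (x : R) : x <= 0 -> D_ l x = 2 * l ^ 2 * exp (- l ^ 2).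
Proof. intros h. unfold D_. destruct (Rle_dec x 0); [reflexivity | lra]. Qed.

Lemma Gamma_nonpos_eq (x : R) : x <= 0 -> Gamma_ l x = 2 * l ^ 2 * exp (- l ^ 2).
Proof. intros h. unfold Gamma_. destruct (Rle_dec x 0); [reflexivity | lra]. Qed.

Lemma A_nonpos_eq (x : R) : x <= 0 -> A_ l x = 2 * l ^ 2 * exp (- l ^ 2).
Proof. intros h. unfold A_. destruct (Rle_dec x 0); [reflexivity | lra]. Qed.

Lemma D_pos_eq (x : R) : 0 < x ->
  D_ l x = 2 * l ^ 2 * exp (l ^ 2 * (x - 1)) * Phi (l * (1 - 2 * x) / sqrt (2 * x)).
Proof. intros h. unfold D_. destruct (Rle_dec x 0); [lra | reflexivity]. Qed.

Lemma Gamma_pos_eq (x : R) : 0 < x ->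
  Gamma_ l x = D_ l x + 2 * l ^ 2 * Phi (- l / sqrt (2 * x)).
Proof. intros h. unfold Gamma_. destruct (Rle_dec x 0); [lra | reflexivity]. Qed.

Lemma A_pos_eq (x : R) : 0 < x -> A_ l x = - 2 * x * D_ l x + Gamma_ l x.
Proof. intros h. unfold A_. destruct (Rle_dec x 0); [lra | reflexivity]. Qed.

Definition p_ (x : R) : R := l / sqrt (2 * x).

Lemma p_pos (x : R) : 0 < x -> 0 < p_ x.
Proof. intros hx. unfold p_. elim_sqrt2x x. apply Rdiv_lt_0_compat; lra. Qed.

Lemma p_sq (x : R) : 0 < x -> p_ x ^ 2 = l ^ 2 / (2 * x).
Proof. intros hx. unfold p_. elim_sqrt2x x. field. lra. Qed.

Lemma exp_mul_phi (x : R) : 0 < x ->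
  exp (l ^ 2 * (x - 1)) * phi (l * (1 - 2 * x) / sqrt (2 * x)) = phi (p_ x).
Proof.
  intros hx. unfold phi, p_. rewrite <- exp_plus. f_equal. elim_sqrt2x x. field. lra.
Qed.

Lemma D_mills_eq (x : R) : 0 < x ->
  D_ l x = 2 * l ^ 2 * phi (p_ x) * exp (((2 * x - 1) * p_ x) ^ 2 / 2)
           * Phi (- ((2 * x - 1) * p_ x)).
Proof.
  intros hx. rewrite D_pos_eq by exact hx.
  replace (exp (l ^ 2 * (x - 1))) with (phi (p_ x) * exp (((2 * x - 1) * p_ x) ^ 2 / 2))
    by (unfold phi, p_; rewrite <- exp_plus; f_equal; elim_sqrt2x x; field; lra).
  replace (l * (1 - 2 * x) / sqrt (2 * x)) with (- ((2 * x - 1) * p_ x))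
    by (unfold p_; elim_sqrt2x x; field; lra).
  ring.
Qed.

Lemma Gamma_p_eq (x : R) : 0 < x -> Gamma_ l x = D_ l x + 2 * l ^ 2 * Phi (- p_ x).
Proof.
  intros hx. rewrite Gamma_pos_eq by exact hx. unfold p_. do 3 f_equal.
  field. elim_sqrt2x x. lra.
Qed.

Lemma A_mills_eq (x : R) : 0 < x ->
  A_ l x = 2 * l ^ 2 * phi (p_ x) / p_ x * (mills (p_ x) - mills ((2 * x - 1) * p_ x)).
Proof.
  intros hx. rewrite A_pos_eq, Gamma_p_eq, D_mills_eq by exact hx. unfold mills.
  pose proof (phi_mul_exp (p_ x)) as hpe. pose proof (p_pos x hx).
  set (p := p_ x) in *. set (E := exp (((2 * x - 1) * p) ^ 2 / 2)).
  replace (exp (p ^ 2 / 2)) with (/ phi p)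
    by (rewrite <- (Rmult_1_l (/ phi p)), <- hpe; field; apply Rgt_not_eq, phi_pos).
  field. split; [apply Rgt_not_eq, phi_pos | lra].
Qed.

Lemma mills_coef_pos (x : R) : 0 < x -> 0 < 2 * l ^ 2 * phi (p_ x) / p_ x.
Proof.
  intros hx. pose proof (phi_pos (p_ x)). pose proof (p_pos x hx).
  apply Rdiv_lt_0_compat; [apply Rmult_lt_0_compat; nra |]; lra.
Qed.

Lemma A_pos_of_lt_1 (x : R) : 0 <= x < 1 -> 0 < A_ l x.
Proof.
  intros [[hx | <-] h1].
  - rewrite A_mills_eq by exact hx. pose proof (mills_coef_pos x hx). pose proof (p_pos x hx).
    pose proof (mills_increasing ((2 * x - 1) * p_ x) (p_ x) ltac:(nra)). nra.
  - rewrite A_nonpos_eq by lra. apply Rmult_lt_0_compat; [nra | apply exp_pos].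
Qed.

Lemma A_neg_of_gt_1 (x : R) : 1 < x -> A_ l x < 0.
Proof.
  intros h1. rewrite A_mills_eq by lra. pose proof (mills_coef_pos x ltac:(lra)).
  pose proof (p_pos x ltac:(lra)).
  pose proof (mills_increasing (p_ x) ((2 * x - 1) * p_ x) ltac:(nra)). nra.
Qed.

Lemma A_1 : A_ l 1 = 0.
Proof. rewrite A_mills_eq by lra. replace ((2 * 1 - 1) * p_ 1) with (p_ 1) by ring. ring. Qed.

Lemma D_bounds (x : R) : 0 <= x -> 0 < D_ l x <= 2 * l ^ 2.
Proof.
  intros [hx | <-].
  2:{ rewrite D_nonpos_eq by lra. pose proof (exp_pos (- l ^ 2)). pose proof l2_pos.
      assert (exp (- l ^ 2) <= 1) by (apply exp_le_1; nra). split; nra. }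
  pose proof l2_pos. destruct (Rle_dec x (/ 2)) as [h | h].
  - rewrite D_pos_eq by exact hx.
    pose proof (exp_pos (l ^ 2 * (x - 1))).
    assert (exp (l ^ 2 * (x - 1)) <= 1) by (apply exp_le_1; nra).
    pose proof (Phi_pos (l * (1 - 2 * x) / sqrt (2 * x))).
    pose proof (Phi_le_1 (l * (1 - 2 * x) / sqrt (2 * x))).
    assert (exp (l ^ 2 * (x - 1)) * Phi (l * (1 - 2 * x) / sqrt (2 * x)) <= 1) by nra.
    split; [apply Rmult_lt_0_compat; [apply Rmult_lt_0_compat |]; nra |]. nra.
  - (* for [x > 1/2] the exponential factor is compensated by the Gaussian tail *)
    rewrite D_mills_eq by exact hx. pose proof (p_pos x hx).
    set (q := (2 * x - 1) * p_ x). assert (hq : 0 <= q) by (unfold q; nra).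
    pose proof (Phi_opp_le_phi q hq). pose proof (Phi_pos (- q)).
    pose proof (phi_pos (p_ x)). pose proof (phi_le_1 (p_ x)). pose proof (exp_pos (q ^ 2 / 2)).
    assert (Phi (- q) * exp (q ^ 2 / 2) <= 1).
    { rewrite <- (phi_mul_exp q). apply Rmult_le_compat_r; lra. }
    assert (phi (p_ x) * exp (q ^ 2 / 2) * Phi (- q) <= 1) by nra.
    split; [apply Rmult_lt_0_compat; [apply Rmult_lt_0_compat |]; nra |]. nra.
Qed.

Lemma Gamma_upper (x : R) : 0 <= x -> Gamma_ l x <= 4 * l ^ 2.
Proof.
  intros [hx | <-]; pose proof l2_pos.
  - rewrite Gamma_p_eq by exact hx. pose proof (D_bounds x (Rlt_le _ _ hx)).
    pose proof (Phi_le_1 (- p_ x)). nra.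
  - rewrite Gamma_nonpos_eq by lra. pose proof (exp_le_1 (- l ^ 2) ltac:(nra)). nra.
Qed.

Lemma Gamma_lower (x : R) : 0 <= x ->
  Rmin (l ^ 2 * exp (- l ^ 2)) (2 * l ^ 2 * Phi (- l)) <= Gamma_ l x.
Proof.
  intros hx0. pose proof l2_pos. pose proof (exp_pos (- l ^ 2)).
  destruct hx0 as [hx | <-].
  2:{ rewrite Gamma_nonpos_eq by lra.
      apply (Rle_trans _ (l ^ 2 * exp (- l ^ 2))); [apply Rmin_l | nra]. }
  rewrite Gamma_p_eq by exact hx. pose proof (D_bounds x (Rlt_le _ _ hx)).
  pose proof (Phi_pos (- p_ x)).
  destruct (Rle_dec x (/ 2)) as [h | h].
  - apply (Rle_trans _ (l ^ 2 * exp (- l ^ 2))); [apply Rmin_l |].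
    enough (l ^ 2 * exp (- l ^ 2) <= D_ l x) by nra.
    rewrite D_pos_eq by exact hx.
    assert (exp (- l ^ 2) <= exp (l ^ 2 * (x - 1))) by (apply exp_le_monotone; nra).
    assert (/ 2 <= Phi (l * (1 - 2 * x) / sqrt (2 * x))).
    { rewrite <- Phi_0. destruct (Req_dec x (/ 2)) as [-> | ne].
      - right. f_equal. field. apply Rgt_not_eq, sqrt_lt_R0. lra.
      - left. apply Phi_increasing. elim_sqrt2x x. apply Rdiv_lt_0_compat; nra. }
    assert (exp (- l ^ 2) <= 2 * exp (l ^ 2 * (x - 1)) * Phi (l * (1 - 2 * x) / sqrt (2 * x)))
      by nra.
    nra.
  - apply (Rle_trans _ (2 * l ^ 2 * Phi (- l))); [apply Rmin_r |].
    assert (Phi (- l) <= Phi (- p_ x)).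
    { left. apply Phi_increasing. unfold p_. elim_sqrt2x x.
      apply Ropp_lt_contravar. apply (Rmult_lt_reg_r u); [lra |].
      replace (l / u * u) with l by (field; lra). nra. }
    nra.
Qed.

Lemma Gamma_lower_pos : 0 < Rmin (l ^ 2 * exp (- l ^ 2)) (2 * l ^ 2 * Phi (- l)).
Proof.
  pose proof l2_pos. apply Rmin_pos; apply Rmult_lt_0_compat; try lra.
  - apply exp_pos.
  - apply Phi_pos.
Qed.

Lemma locally_Rpos (P : R -> Prop) (x : R) : 0 < x -> (forall y, 0 < y -> P y) -> locally x P.
Proof. intros hx H. apply (locally_interval P x (Finite 0) p_infty); simpl; auto. Qed.

Definition dD (x : R) : R :=
  l ^ 2 * D_ l x - 2 * l ^ 2 * inv_sqrt_2pi * phi (p_ x) * (p_ x ^ 3 / l ^ 2 + p_ x).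

Definition dGamma (x : R) : R :=
  l ^ 2 * D_ l x - 2 * l ^ 2 * inv_sqrt_2pi * phi (p_ x) * p_ x.

Definition dA (x : R) : R := - 2 * D_ l x - 2 * x * dD x + dGamma x.

Lemma D_deriv (x : R) : 0 < x -> is_derive (D_ l) x (dD x).
Proof.
  intros hx.
  apply (is_derive_ext_loc (fun y => 2 * l ^ 2 * exp (l ^ 2 * (y - 1)) *
                                     Phi (l * (1 - 2 * y) / sqrt (2 * y)))).
  { apply locally_Rpos; [exact hx |]. intros y hy. symmetry. now apply D_pos_eq. }
  auto_derive.
  - repeat split; [apply ex_derive_Phi | lra | apply Rgt_not_eq, sqrt_lt_R0; lra].
  - rewrite Derive_Phi. unfold dD. rewrite D_pos_eq, <- exp_mul_phi by exact hx.
    unfold p_. normalize_exp_args. elim_sqrt2x x.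
    normalize_args Phi. normalize_args phi. field. lra.
Qed.

Lemma Gamma_deriv (x : R) : 0 < x -> is_derive (Gamma_ l) x (dGamma x).
Proof.
  intros hx.
  apply (is_derive_ext_loc (fun y => D_ l y + 2 * l ^ 2 * Phi (- l / sqrt (2 * y)))).
  { apply locally_Rpos; [exact hx |]. intros y hy. symmetry. now apply Gamma_pos_eq. }
  auto_derive.
  - repeat split; [eexists; now apply D_deriv | apply ex_derive_Phi | lra
                  | apply Rgt_not_eq, sqrt_lt_R0; lra].
  - rewrite Derive_Phi. erewrite is_derive_unique by now apply D_deriv.
    unfold dD, dGamma, p_. rewrite <- (phi_opp (l / sqrt (2 * x))).
    elim_sqrt2x x. normalize_args phi. field. lra.
Qed.

Lemma A_deriv (x : R) : 0 < x -> is_derive (A_ l) x (dA x).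
Proof.
  intros hx.
  apply (is_derive_ext_loc (fun y => - 2 * y * D_ l y + Gamma_ l y)).
  { apply locally_Rpos; [exact hx |]. intros y hy. symmetry. now apply A_pos_eq. }
  auto_derive.
  - repeat split; [eexists; now apply D_deriv | eexists; now apply Gamma_deriv].
  - erewrite !is_derive_unique by first [now apply D_deriv | now apply Gamma_deriv].
    unfold dA. ring.
Qed.

Lemma dD_bounded : exists K, forall x, 0 < x -> Rabs (dD x) <= K.
Proof.
  exists (2 * l ^ 4 + 2 * inv_sqrt_2pi * (16 + l ^ 2)). intros x hx.
  pose proof l2_pos. pose proof inv_sqrt_2pi_pos. pose proof (D_bounds x (Rlt_le _ _ hx)).
  pose proof (p_pos x hx) as hp. set (p := p_ x) in *. unfold dD. fold p.
  pose proof (phi_moment3 p (Rlt_le _ _ hp)). pose proof (phi_moment1 p (Rlt_le _ _ hp)).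
  pose proof (phi_pos p).
  replace (2 * l ^ 2 * inv_sqrt_2pi * phi p * (p ^ 3 / l ^ 2 + p))
    with (2 * inv_sqrt_2pi * (p ^ 3 * phi p) + 2 * l ^ 2 * inv_sqrt_2pi * (p * phi p))
    by (field; lra).
  assert (0 <= p ^ 3 * phi p) by (apply Rmult_le_pos; [apply pow_le |]; lra).
  assert (0 <= p * phi p) by nra.
  assert (0 <= 2 * l ^ 2 * inv_sqrt_2pi * (p * phi p) <= 2 * l ^ 2 * inv_sqrt_2pi).
  { split; [apply Rmult_le_pos; nra |]. assert (0 <= 2 * l ^ 2 * inv_sqrt_2pi) by nra. nra. }
  apply Rabs_le. split; nra.
Qed.

Lemma dGamma_bounded : exists K, forall x, 0 < x -> Rabs (dGamma x) <= K.
Proof.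
  exists (2 * l ^ 4 + 2 * l ^ 2 * inv_sqrt_2pi). intros x hx.
  pose proof l2_pos. pose proof inv_sqrt_2pi_pos. pose proof (D_bounds x (Rlt_le _ _ hx)).
  pose proof (p_pos x hx) as hp. set (p := p_ x) in *. unfold dGamma. fold p.
  pose proof (phi_moment1 p (Rlt_le _ _ hp)). pose proof (phi_pos p).
  replace (2 * l ^ 2 * inv_sqrt_2pi * phi p * p) with (2 * l ^ 2 * inv_sqrt_2pi * (p * phi p))
    by ring.
  assert (0 <= p * phi p) by nra.
  assert (0 <= 2 * l ^ 2 * inv_sqrt_2pi * (p * phi p) <= 2 * l ^ 2 * inv_sqrt_2pi).
  { split; [apply Rmult_le_pos; nra |]. assert (0 <= 2 * l ^ 2 * inv_sqrt_2pi) by nra. nra. }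
  apply Rabs_le. split; nra.
Qed.

Lemma dA_bounded : exists K, forall x, 0 < x -> Rabs (dA x) <= K * (1 + x).
Proof.
  destruct dD_bounded as [KD HD]. destruct dGamma_bounded as [KG HG].
  exists (4 * l ^ 2 + 2 * KD + KG). intros x hx. pose proof l2_pos.
  pose proof (D_bounds x (Rlt_le _ _ hx)).
  pose proof (HD x hx) as h1. pose proof (HG x hx) as h2.
  pose proof (Rabs_pos (dD x)). pose proof (Rabs_pos (dGamma x)).
  apply Rabs_le_between in h1. apply Rabs_le_between in h2. unfold dA.
  assert (h3 : Rabs (2 * x * dD x) <= 2 * x * KD).
  { rewrite Rabs_mult, (Rabs_right (2 * x)) by lra. apply Rmult_le_compat_l; [lra |].
    now apply HD. }
  apply Rabs_le_between in h3. apply Rabs_le. split; nra.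
Qed.

Lemma phi_p_le (x : R) : 0 < x -> phi (p_ x) <= 4 * x / l ^ 2.
Proof.
  intros hx. pose proof (phi_moment2 (p_ x)) as h. rewrite p_sq in h by exact hx.
  pose proof l2_pos.
  apply (Rmult_le_reg_l (l ^ 2 / (2 * x))); [apply Rdiv_lt_0_compat; lra |].
  replace (l ^ 2 / (2 * x) * (4 * x / l ^ 2)) with 2 by (field; lra). lra.
Qed.

Lemma p_mul_phi_p_le (x : R) : 0 < x -> p_ x * phi (p_ x) <= 32 * x / l ^ 2.
Proof.
  intros hx. pose proof (p_pos x hx) as hp. pose proof (phi_moment3 (p_ x) (Rlt_le _ _ hp)).
  pose proof (p_sq x hx) as hsq. pose proof l2_pos. set (p := p_ x) in *.
  assert (h : p ^ 2 * (p * phi p) <= 16)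
    by (replace (p ^ 2 * (p * phi p)) with (p ^ 3 * phi p) by ring; lra).
  rewrite hsq in h.
  apply (Rmult_le_reg_l (l ^ 2 / (2 * x))); [apply Rdiv_lt_0_compat; lra |].
  replace (l ^ 2 / (2 * x) * (32 * x / l ^ 2)) with 16 by (field; lra). lra.
Qed.

(* [D_ l x - D_ l 0 = 2 l^2 (E - exp (- l^2)) - 2 l^2 E Phi (- a)] with
   [E = exp (l^2 (x - 1))]; the first term is [O(x)] by convexity of [exp], the second
   by the Gaussian tail bound [E phi a = phi p]. *)
Lemma D_near0 : exists C, forall x, 0 < x <= / 2 -> Rabs (D_ l x - D_ l 0) <= C * x.
Proof.
  exists (2 * l ^ 4 + 8). intros x [hx hx2]. pose proof l2_pos.
  rewrite D_pos_eq, (D_nonpos_eq 0) by lra.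
  set (a := l * (1 - 2 * x) / sqrt (2 * x)).
  assert (ha : 0 <= a) by (unfold a; elim_sqrt2x x; apply Rdiv_le_0_compat; nra).
  pose proof (Phi_opp_le_phi a ha) as htail. rewrite Phi_opp in htail.
  pose proof (exp_mul_phi x hx) as hE. fold a in hE. pose proof (phi_p_le x hx).
  set (E := exp (l ^ 2 * (x - 1))) in *.
  assert (hE0 : 0 < E) by apply exp_pos.
  assert (hE1 : E <= 1) by (apply exp_le_1; nra).
  assert (hEd : E = exp (- l ^ 2) * exp (l ^ 2 * x))
    by (unfold E; rewrite <- exp_plus; f_equal; ring).
  assert (hconv : exp (l ^ 2 * x) * (1 - l ^ 2 * x) <= 1).
  { apply (Rle_trans _ (exp (l ^ 2 * x) * exp (- (l ^ 2 * x)))).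
    - apply Rmult_le_compat_l; [left; apply exp_pos |].
      pose proof (exp_ineq1_le (- (l ^ 2 * x))). lra.
    - rewrite <- exp_plus, Rplus_opp_r, exp_0. lra. }
  assert (h1 : 0 <= E - exp (- l ^ 2) <= E * (l ^ 2 * x)).
  { pose proof (exp_pos (- l ^ 2)).
    assert (1 <= exp (l ^ 2 * x)) by (rewrite <- exp_0; apply exp_le_monotone; nra).
    rewrite hEd. split; nra. }
  assert (h2 : 0 <= E * (1 - Phi a) <= 4 * x / l ^ 2).
  { pose proof (Phi_le_1 a). split; [nra |].
    apply (Rle_trans _ (E * phi a)); [apply Rmult_le_compat_l |]; lra. }
  replace (2 * l ^ 2 * E * Phi a - 2 * l ^ 2 * exp (- l ^ 2))
    with (2 * l ^ 2 * (E - exp (- l ^ 2)) - 2 * l ^ 2 * (E * (1 - Phi a))) by ring.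
  assert (2 * l ^ 2 * (E * (1 - Phi a)) <= 8 * x).
  { apply (Rle_trans _ (2 * l ^ 2 * (4 * x / l ^ 2))); [apply Rmult_le_compat_l; lra |].
    right. field. lra. }
  assert (E - exp (- l ^ 2) <= l ^ 2 * x) by nra.
  assert (2 * l ^ 2 * (E - exp (- l ^ 2)) <= 2 * l ^ 4 * x) by nra.
  apply Rabs_le. split; nra.
Qed.

Lemma Gamma_near0 : exists C, forall x, 0 < x <= / 2 -> Rabs (Gamma_ l x - Gamma_ l 0) <= C * x.
Proof.
  destruct D_near0 as [C HC]. exists (C + 8). intros x [hx hx2].
  rewrite Gamma_p_eq, (Gamma_nonpos_eq 0), <- (D_nonpos_eq 0) by lra.
  pose proof (HC x (conj hx hx2)) as hD. apply Rabs_le_between in hD.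
  pose proof (phi_p_le x hx). pose proof (p_pos x hx) as hp.
  pose proof (Phi_opp_le_phi (p_ x) (Rlt_le _ _ hp)). pose proof (Phi_pos (- p_ x)).
  pose proof l2_pos.
  assert (2 * l ^ 2 * Phi (- p_ x) <= 8 * x).
  { apply (Rle_trans _ (2 * l ^ 2 * (4 * x / l ^ 2))); [apply Rmult_le_compat_l; lra |].
    right. field. lra. }
  apply Rabs_le. split; nra.
Qed.

Lemma A_near0 : exists C, forall x, 0 < x <= / 2 -> Rabs (A_ l x - A_ l 0) <= C * x.
Proof.
  destruct Gamma_near0 as [C HC]. exists (C + 4 * l ^ 2). intros x [hx hx2].
  rewrite A_pos_eq, (A_nonpos_eq 0), <- (Gamma_nonpos_eq 0) by lra.
  pose proof (HC x (conj hx hx2)) as hG. apply Rabs_le_between in hG.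
  pose proof (D_bounds x (Rlt_le _ _ hx)).
  assert (0 <= 2 * x * D_ l x <= 4 * l ^ 2 * x) by (split; nra).
  apply Rabs_le. split; nra.
Qed.

Lemma dA_near0 : exists C, forall x, 0 < x <= / 2 ->
  Rabs (dA x - (l ^ 2 - 2) * D_ l 0) <= C * x.
Proof.
  destruct D_near0 as [CD HCD]. destruct dD_bounded as [KD HKD].
  exists ((l ^ 2 + 2) * CD + 2 * KD + 64 * inv_sqrt_2pi). intros x [hx hx2].
  replace (dA x - (l ^ 2 - 2) * D_ l 0) with ((l ^ 2 - 2) * (D_ l x - D_ l 0) - 2 * x * dD x
    - 2 * l ^ 2 * inv_sqrt_2pi * (p_ x * phi (p_ x))) by (unfold dA, dGamma; ring).
  pose proof (HCD x (conj hx hx2)) as hD. pose proof (HKD x hx) as hdD.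
  pose proof (p_mul_phi_p_le x hx). pose proof (p_pos x hx) as hp. pose proof (phi_pos (p_ x)).
  pose proof inv_sqrt_2pi_pos. pose proof l2_pos.
  pose proof (Rabs_pos (D_ l x - D_ l 0)). pose proof (Rabs_pos (dD x)).
  assert (t1 : Rabs ((l ^ 2 - 2) * (D_ l x - D_ l 0)) <= (l ^ 2 + 2) * (CD * x)).
  { rewrite Rabs_mult. apply Rmult_le_compat; try apply Rabs_pos; [| exact hD].
    apply Rabs_le. split; lra. }
  assert (t2 : Rabs (2 * x * dD x) <= 2 * x * KD).
  { rewrite Rabs_mult, (Rabs_right (2 * x)) by lra. apply Rmult_le_compat_l; lra. }
  assert (t3 : 0 <= 2 * l ^ 2 * inv_sqrt_2pi * (p_ x * phi (p_ x)) <= 64 * inv_sqrt_2pi * x).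
  { split; [apply Rmult_le_pos; nra |].
    apply (Rle_trans _ (2 * l ^ 2 * inv_sqrt_2pi * (32 * x / l ^ 2)));
      [apply Rmult_le_compat_l; nra | right; field; lra]. }
  apply Rabs_le_between in t1. apply Rabs_le_between in t2.
  apply Rabs_le. split; nra.
Qed.

Lemma dA_continuity_pt (x : R) : 0 < x -> continuity_pt dA x.
Proof.
  intros hx. apply continuity_pt_filterlim, ex_derive_continuous_R.
  unfold dA, dD, dGamma, p_, phi. auto_derive.
  repeat split; try (eexists; now apply D_deriv); try lra;
    apply Rgt_not_eq, sqrt_lt_R0; lra.
Qed.

Lemma A_le_Gamma (x : R) : 0 <= x -> A_ l x <= Gamma_ l x.
Proof.
  intros [hx | <-].
  - rewrite A_pos_eq by exact hx. pose proof (D_bounds x (Rlt_le _ _ hx)). nra.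
  - rewrite A_nonpos_eq, Gamma_nonpos_eq by lra. lra.
Qed.

Lemma A_growth (x : R) : 0 <= x -> Rabs (A_ l x) <= 4 * l ^ 2 * (1 + x).
Proof.
  intros hx0. pose proof l2_pos. pose proof (Gamma_upper x hx0).
  pose proof (Gamma_lower x hx0). pose proof Gamma_lower_pos.
  destruct hx0 as [hx | <-].
  - rewrite A_pos_eq by exact hx. pose proof (D_bounds x (Rlt_le _ _ hx)).
    apply Rabs_le. split; nra.
  - rewrite A_nonpos_eq by lra. rewrite Gamma_nonpos_eq in * by lra.
    rewrite Rabs_right by (apply Rle_ge; lra). lra.
Qed.

(* Along [x = U^2 / 2] one has [p = l / U <= l <= q]; the two monotonicities give a
   linear decay in [U]. *)
Lemma A_le_linear (U : R) : 2 <= U ->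
  A_ l (U ^ 2 / 2) <= 2 * l ^ 2 - 2 * l * phi l * mills l * U.
Proof.
  intros hU. set (x := U ^ 2 / 2). assert (hx : 0 < x) by (unfold x; nra).
  assert (hp : p_ x = l / U).
  { unfold p_, x. f_equal. replace (2 * (U ^ 2 / 2)) with (U ^ 2) by field. apply sqrt_pow2. lra. }
  rewrite A_mills_eq, hp by exact hx.
  assert (hpl : 0 < l / U <= l).
  { split; [apply Rdiv_lt_0_compat; lra |].
    apply (Rmult_le_reg_r U); [lra |]. replace (l / U * U) with l by (field; lra). nra. }
  assert (hq : l <= (2 * x - 1) * (l / U)).
  { unfold x. apply (Rmult_le_reg_r U); [lra |].
    replace ((2 * (U ^ 2 / 2) - 1) * (l / U) * U) with (l * (U * U - 1)) by (field; lra).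
    assert (0 <= U * U - 1 - U) by nra. nra. }
  set (p := l / U) in *. set (q := (2 * x - 1) * p) in *.
  assert (hgq : mills l <= mills q).
  { destruct hq as [hq | <-]; [left; now apply mills_increasing | lra]. }
  assert (hgl : 0 < mills l) by (rewrite <- mills_0; now apply mills_increasing).
  assert (hfp : phi l <= phi p) by (apply exp_le_monotone; nra).
  assert (e1 : 2 * l ^ 2 * phi p / p * mills p = 2 * l ^ 2 * Phi (- p)).
  { unfold mills. pose proof (phi_mul_exp p) as hpe.
    replace (2 * l ^ 2 * phi p / p * (p * Phi (- p) * exp (p ^ 2 / 2)))
      with (2 * l ^ 2 * Phi (- p) * (phi p * exp (p ^ 2 / 2))) by (field; lra).
    rewrite hpe. ring. }
  assert (e2 : 2 * l ^ 2 * phi p / p = 2 * l * U * phi p) by (unfold p; field; lra).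
  pose proof (Phi_le_1 (- p)). pose proof (phi_pos l). pose proof l2_pos.
  assert (hprod : phi l * mills l <= phi p * mills q) by (apply Rmult_le_compat; lra).
  apply (Rmult_le_compat_l (2 * l * U)) in hprod; [| nra].
  rewrite Rmult_minus_distr_l, e1, e2. nra.
Qed.

Lemma A_not_bounded_below : ~ bounded_below_on_Rplus (A_ l).
Proof.
  intros [M HM].
  set (k := 2 * l * phi l * mills l).
  assert (hk : 0 < k).
  { unfold k. pose proof (phi_pos l).
    assert (0 < mills l) by (rewrite <- mills_0; now apply mills_increasing).
    apply Rmult_lt_0_compat; [apply Rmult_lt_0_compat |]; lra. }
  set (U := Rmax 2 ((2 * l ^ 2 - M + 1) / k)).
  assert (hU : (2 * l ^ 2 - M + 1) / k <= U) by apply Rmax_r.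
  assert (hU2 : 2 <= U) by apply Rmax_l.
  pose proof (A_le_linear U hU2) as hA. fold k in hA.
  pose proof (HM (U ^ 2 / 2) ltac:(nra)) as hM.
  apply (Rmult_le_compat_r k) in hU; [| lra].
  replace ((2 * l ^ 2 - M + 1) / k * k) with (2 * l ^ 2 - M + 1) in hU by (field; lra).
  lra.
Qed.

End Formulas.

(** * Regularity *)

Section Regularity.

Variable l : R.
Hypothesis hl : 0 < l.

Lemma D_continuity_pt_0 : continuity_pt (D_ l) 0.
Proof.
  destruct (D_near0 l hl) as [C HC]. apply (continuity_pt_0_of_right_bound _ C); [| exact HC].
  intros y hy. now rewrite !D_nonpos_eq by lra.
Qed.

Lemma Gamma_continuity_pt_0 : continuity_pt (Gamma_ l) 0.
Proof.
  destruct (Gamma_near0 l hl) as [C HC]. apply (continuity_pt_0_of_right_bound _ C); [| exact HC].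
  intros y hy. now rewrite !Gamma_nonpos_eq by lra.
Qed.

Lemma A_continuity_pt_0 : continuity_pt (A_ l) 0.
Proof.
  destruct (A_near0 l hl) as [C HC]. apply (continuity_pt_0_of_right_bound _ C); [| exact HC].
  intros y hy. now rewrite !A_nonpos_eq by lra.
Qed.

Lemma D_regular :
  pos_on_Rplus (D_ l) /\ lipschitz_on_Rplus (D_ l) /\ bounded_on_Rplus (D_ l).
Proof.
  split; [| split].
  - intros x hx. now apply D_bounds.
  - destruct (dD_bounded l hl) as [K HK].
    apply (lipschitz_on_Rplus_of_derive _ (dD l) (D_deriv l hl) D_continuity_pt_0 K HK).
  - exists (2 * l ^ 2). intros x hx. destruct (D_bounds l hl x hx).
    rewrite Rabs_right; lra.
Qed.

Lemma Gamma_regular :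
  pos_on_Rplus (Gamma_ l) /\ lipschitz_on_Rplus (Gamma_ l) /\ bounded_on_Rplus (Gamma_ l).
Proof.
  pose proof (Gamma_lower_pos l hl). split; [| split].
  - intros x hx. pose proof (Gamma_lower l hl x hx). lra.
  - destruct (dGamma_bounded l hl) as [K HK].
    apply (lipschitz_on_Rplus_of_derive _ (dGamma l) (Gamma_deriv l hl) Gamma_continuity_pt_0 K HK).
  - exists (4 * l ^ 2). intros x hx.
    pose proof (Gamma_lower l hl x hx). pose proof (Gamma_upper l hl x hx).
    rewrite Rabs_right; lra.
Qed.

Lemma sqrt_Gamma_regular :
  pos_on_Rplus (fun x => sqrt (Gamma_ l x)) /\
  lipschitz_on_Rplus (fun x => sqrt (Gamma_ l x)) /\
  bounded_on_Rplus (fun x => sqrt (Gamma_ l x)).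
Proof.
  set (m := Rmin (l ^ 2 * exp (- l ^ 2)) (2 * l ^ 2 * Phi (- l))).
  assert (hm : 0 < m) by apply (Gamma_lower_pos l hl).
  destruct Gamma_regular as [_ [[L HL] _]].
  split; [| split].
  - intros x hx. apply sqrt_lt_R0. pose proof (Gamma_lower l hl x hx) as hlow. fold m in hlow.
    lra.
  - exists (/ (2 * sqrt m) * L). intros x y hx hy.
    apply (Rle_trans _ _ _ (sqrt_lipschitz_above _ _ m hm (Gamma_lower l hl x hx)
                                                        (Gamma_lower l hl y hy))).
    rewrite Rmult_assoc. apply Rmult_le_compat_l; [| now apply HL].
    left. apply Rinv_0_lt_compat. pose proof (sqrt_lt_R0 m hm). lra.
  - exists (1 + 4 * l ^ 2). intros x hx.
    pose proof (Gamma_lower l hl x hx) as hlow. pose proof (Gamma_upper l hl x hx).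
    fold m in hlow.
    rewrite Rabs_right by (apply Rle_ge, sqrt_pos).
    pose proof (sqrt_pos (Gamma_ l x)). pose proof (sqrt_sqrt (Gamma_ l x) ltac:(lra)). nra.
Qed.

Lemma A_bounded_above : bounded_above_on_Rplus (A_ l).
Proof.
  exists (4 * l ^ 2). intros x hx.
  pose proof (A_le_Gamma l hl x hx). pose proof (Gamma_upper l hl x hx). lra.
Qed.

Lemma A_C1 : C1_on_Rplus (A_ l).
Proof.
  destruct (dA_near0 l hl) as [C HC].
  apply (C1_on_Rplus_of_derive _ (dA l) ((l ^ 2 - 2) * D_ l 0) C).
  - exact (A_deriv l hl).
  - exact (dA_continuity_pt l hl).
  - exact A_continuity_pt_0.
  - exact HC.
Qed.

Lemma A_weighted_lipschitz : exists K, forall x y, 0 <= x -> 0 <= y ->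
  Rabs (A_ l x - A_ l y) <= K * (1 + Rabs x) * Rabs (y - x).
Proof.
  destruct (dA_bounded l hl) as [K HK].
  apply (weighted_lipschitz_of_derive _ (dA l) (A_deriv l hl) A_continuity_pt_0 K (4 * l ^ 2) HK).
  exact (A_growth l hl).
Qed.

End Regularity.

Theorem lemma4p2 (l : R) (hl : 0 < l) :
  (pos_on_Rplus (D_ l) /\ lipschitz_on_Rplus (D_ l) /\ bounded_on_Rplus (D_ l)) /\
  (pos_on_Rplus (Gamma_ l) /\ lipschitz_on_Rplus (Gamma_ l) /\ bounded_on_Rplus (Gamma_ l)) /\
  (pos_on_Rplus (fun x => sqrt (Gamma_ l x)) /\
   lipschitz_on_Rplus (fun x => sqrt (Gamma_ l x)) /\
   bounded_on_Rplus (fun x => sqrt (Gamma_ l x))) /\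
  bounded_above_on_Rplus (A_ l) /\ ~ bounded_below_on_Rplus (A_ l) /\
  C1_on_Rplus (A_ l) /\
  loc_lipschitz_on_Rplus (A_ l) /\
  (exists K, forall x y, 0 <= x -> 0 <= y ->
     Rabs (A_ l x - A_ l y) <= K * (1 + Rabs x) * Rabs (y - x)) /\
  (forall x, 0 <= x < 1 -> 0 < A_ l x) /\
  (forall x, 1 < x -> A_ l x < 0) /\
  A_ l 1 = 0.
Proof.
  destruct (A_weighted_lipschitz l hl) as [K HK].
  split; [exact (D_regular l hl) |].
  split; [exact (Gamma_regular l hl) |].
  split; [exact (sqrt_Gamma_regular l hl) |].
  split; [exact (A_bounded_above l hl) |].
  split; [exact (A_not_bounded_below l hl) |].
  split; [exact (A_C1 l hl) |].
  split; [exact (loc_lipschitz_of_weighted _ K HK) |].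
  split; [exists K; exact HK |].
  split; [exact (A_pos_of_lt_1 l hl) |].
  split; [exact (A_neg_of_gt_1 l hl) | exact (A_1 l hl)].
Qed.
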